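(* Let $\mathcal{X}\subseteq\mathbb{R}^d$ be convex and compact, $f:\mathcal{X}\to\mathbb{R}$ convex and differentiable, $\epsilon,\delta>0$. Let $(A_k)_{k\ge0}$ be a nondecreasing sequence of positive numbers, $\tau_k=(A_{k+1}-A_k)/A_{k+1}$, let $x_0\in\mathcal{X}$, and for $k\ge0$ let $$z_k\in\arg\min_{z\in\mathcal{X}}\langle\nabla f(x_k),z\rangle,\qquad x_{k+1}=\tau_kz_k+(1-\tau_k)x_k.$$ For $x\in\mathcal{X}$ let $E_k=A_k\big(f(x_k)-f(x)\big)$. If $\nabla f$ is $(1/\epsilon)$-Lipschitz on $\mathcal{X}$, then for every $x\in\mathcal{X}$ and every $k$, $$\frac{E_{k+1}-E_k}{\delta}\le\frac{A_{k+1}\tau_k^2}{2\epsilon\delta}\|z_k-x_k\|^2.$$ If instead, for some $\nu\in(0,1]$, $\|\nabla f(x)-\nabla f(y)\|\le\frac1\epsilon\|x-y\|^\nu$ for all $x,y\in\mathcal{X}$, then for every $x\in\mathcal{X}$ and every $k$, $$\frac{E_{k+1}-E_k}{\delta}\le\frac{A_{k+1}\tau_k^{1+\nu}}{(1+\nu)\epsilon\delta}\|z_k-x_k\|^{1+\nu}.$$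
   Context: $\|\cdot\|$ is the Euclidean norm. *)

From HB Require Import structures.
From mathcomp Require Import all_boot all_order all_algebra.
From mathcomp Require Import all_classical all_reals all_analysis.
Set Implicit Arguments. Unset Strict Implicit. Unset Printing Implicit Defensive.
Import Order.TTheory GRing.Theory Num.Theory.
Import numFieldNormedType.Exports.
Local Open Scope classical_set_scope.
Local Open Scope ring_scope.

Definition inner {R : realType} {d : nat} (u v : 'rV[R]_d) : R :=
  \sum_(i < d) u 0 i * v 0 i.
Definition enorm {R : realType} {d : nat} (v : 'rV[R]_d) : R :=
  Num.sqrt (\sum_(i < d) v 0 i ^+ 2).

Definition grad {R : realType} {d : nat} (f : 'rV[R]_d -> R) (x : 'rV[R]_d)
  : 'rV[R]_d := \row_(i < d) ('D_(delta_mx 0 i) f x).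

Definition convex_on {R : realType} {d : nat} (X : set 'rV[R]_d)
  (f : 'rV[R]_d -> R) : Prop :=
  forall x y t, X x -> X y -> 0 <= t <= 1 ->
    f (t *: x + (1 - t) *: y) <= t * f x + (1 - t) * f y.

From HB Require Import structures.
From mathcomp Require Import all_boot all_order all_algebra.
From mathcomp Require Import all_classical all_reals all_analysis.
From mathcomp Require Import ring lra.
Import Order.TTheory GRing.Theory Num.Theory.
Import numFieldNormedType.Exports.
Local Open Scope classical_set_scope.
Local Open Scope ring_scope.

(* Hölder continuity of the gradient (exponent nu, constant L) yields the descent inequality
   f(x + h) <= f(x) + <grad f(x), h> + L/(1+nu) |h|^(1+nu).  Apply it to the Frank-Wolfe step
   h = tau_k (z_k - x_k), and add the first-order convexity bound
   f(x_k) - f(x) <= <grad f(x_k), x_k - x> weighted by A_(k+1) - A_k = tau_k A_(k+1): the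
   linear terms sum to A_(k+1) tau_k <grad f(x_k), z_k - x>, which is <= 0 because z_k minimizes
   <grad f(x_k), .> over X, so only the error term remains.  The Lipschitz case is nu = 1. *)

Section Euclidean.
Context {R : realType} {d : nat}.
Implicit Types (u v w : 'rV[R]_d).

Lemma innerBl u v w : inner (u - v) w = inner u w - inner v w.
Proof. by rewrite /inner -sumrB; apply: eq_bigr => i _; rewrite !mxE mulrBl. Qed.

Lemma innerBr u v w : inner w (u - v) = inner w u - inner w v.
Proof. by rewrite /inner -sumrB; apply: eq_bigr => i _; rewrite !mxE mulrBr. Qed.

Lemma innerZr (t : R) v w : inner w (t *: v) = t * inner w v.
Proof. by rewrite /inner mulr_sumr; apply: eq_bigr => i _; rewrite !mxE mulrCA. Qed.

Lemma enorm_ge0 v : 0 <= enorm v.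
Proof. exact: sqrtr_ge0. Qed.

Lemma enormZ (t : R) v : enorm (t *: v) = `|t| * enorm v.
Proof.
rewrite /enorm -sqrtr_sqr -sqrtrM ?sqr_ge0 // mulr_sumr.
by congr Num.sqrt; apply: eq_bigr => i _; rewrite mxE exprMn.
Qed.

Lemma inner_sqr_le u v :
  inner u v ^+ 2 <= (\sum_(i < d) u 0 i ^+ 2) * (\sum_(i < d) v 0 i ^+ 2).
Proof.
set a := \sum_(i < d) _; set b := \sum_(i < d) _.
have ab_ij : a * b = \sum_(i < d) \sum_(j < d) u 0 i ^+ 2 * v 0 j ^+ 2.
  by rewrite big_distrl; apply: eq_bigr => i _; rewrite big_distrr.
have ab_ji : a * b = \sum_(i < d) \sum_(j < d) u 0 j ^+ 2 * v 0 i ^+ 2.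
  by rewrite big_distrr; apply: eq_bigr => i _; rewrite big_distrl.
have uv2 : inner u v ^+ 2 = \sum_(i < d) \sum_(j < d) (u 0 i * v 0 i) * (u 0 j * v 0 j).
  by rewrite expr2 /inner big_distrl; apply: eq_bigr => i _; rewrite big_distrr.
suff : inner u v ^+ 2 * 2 <= a * b + a * b by lra.
rewrite uv2 {1}ab_ij ab_ji -big_split mulr_suml; apply: ler_sum => i _.
rewrite -big_split mulr_suml; apply: ler_sum => j _.
rewrite /=; have := sqr_ge0 (u 0 i * v 0 j - u 0 j * v 0 i); nra.
Qed.

Lemma cauchy_schwarz u v : inner u v <= enorm u * enorm v.
Proof.
have [uv_le0|uv_gt0] := leP (inner u v) 0.
  by rewrite (le_trans uv_le0) ?mulr_ge0 ?enorm_ge0.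
have sum_sqr_ge0 w : 0 <= \sum_(i < d) w 0 i ^+ 2 by apply: sumr_ge0 => i _; exact: sqr_ge0.
rewrite /enorm -sqrtrM // -(ger0_norm (ltW uv_gt0)) -sqrtr_sqr ler_sqrt ?mulr_ge0 //.
exact: inner_sqr_le.
Qed.

End Euclidean.

Section Gradient.
Context {R : realType} {d : nat}.
Implicit Types (f : 'rV[R]_d -> R) (x y h : 'rV[R]_d).

Lemma derive_grad f x h : differentiable f x -> 'D_h f x = inner (grad f x) h.
Proof.
move=> df; rewrite deriveE // {1}(row_sum_delta h) linear_sum /inner.
by apply: eq_bigr => i _; rewrite linearZ /= mxE -deriveE // mulrC.
Qed.

Lemma is_derive_line f x h t : differentiable f (x + t *: h) ->
  is_derive t 1 (fun s : R => f (x + s *: h)) (inner (grad f (x + t *: h)) h).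
Proof.
move=> df; rewrite -derive_grad //.
have quotE : (fun e : R => e^-1 *: ((fun s => f (x + s *: h)) (e *: 1 + t) - f (x + t *: h)))
    = (fun e : R => e^-1 *: (f (e *: h + (x + t *: h)) - f (x + t *: h))).
  apply/funext => e; congr (_ *: (f _ - _)).
  by rewrite [e *: 1]mulr1 scalerDl addrCA addrA.
have dline : derivable (fun s : R => f (x + s *: h)) t 1.
  by rewrite /derivable /= quotE; exact: diff_derivable.
have -> : 'D_h f (x + t *: h) = 'D_1 (fun s : R => f (x + s *: h)) t.
  by rewrite /derive /= quotE.
exact: derivableP.
Qed.

Lemma convex_on_grad_le {X : set 'rV[R]_d} {f x y} :
  convex_on X f -> X x -> X y -> differentiable f x ->
  inner (grad f x) (y - x) <= f y - f x.
Proof.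
move=> fX Xx Xy df; rewrite -derive_grad //.
have : (fun e : R => e^-1 *: ((f \o shift x) (e *: (y - x)) - f x)) @ 0^'+
    --> 'D_(y - x) f x.
  have dv : derivable f x (y - x) by exact: diff_derivable.
  exact: cvg_dnbhs_at_right dv.
move=> /cvgr_to_le; apply; near=> e => /=.
have e_gt0 : 0 < e by near: e; exact: nbhs_right_gt.
have e_le1 : e <= 1 by near: e; exact: nbhs_right_le.
have -> : e *: (y - x) + x = e *: y + (1 - e) *: x.
  by rewrite scalerBr scalerBl scale1r addrAC addrA.
rewrite /GRing.scale /= ler_pdivrMl // lerBlDr.
have := fX y x e Xy Xx; rewrite (ltW e_gt0) e_le1 => /(_ isT); lra.
Unshelve. all: end_near.
Qed.

End Gradient.

Section HolderDescent.
Context {R : realType} {d : nat}.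
Context {X : set 'rV[R]_d} {f : 'rV[R]_d -> R} {x h : 'rV[R]_d} {nu L : R}.
Hypothesis convexX : convex_set X.
Hypothesis df : forall y, X y -> differentiable f y.
Hypothesis Xx : X x.
Hypothesis Xxh : X (x + h).
Hypothesis nu_ge0 : 0 <= nu.
Hypothesis holder_grad : forall u v, X u -> X v ->
  enorm (grad f u - grad f v) <= L * enorm (u - v) `^ nu.

Lemma segment_in (t : R) : 0 <= t <= 1 -> X (x + t *: h).
Proof.
move=> /andP[t_ge0 t_le1].
have := convexX (x + h) x (Itv01 t_ge0 t_le1); rewrite !inE => /(_ Xxh Xx).
suff <- : t *: (x + h) + (1 - t) *: x = x + t *: h by [].
by rewrite scalerDr scalerBl scale1r addrC addrA subrK.
Qed.

Let nu1_gt0 : 0 < 1 + nu.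
Proof. by rewrite (lt_le_trans ltr01) // lerDl. Qed.

Let K := L / (1 + nu) * enorm h `^ (1 + nu).

(* The descent inequality is gap 1 <= gap 0.  K is chosen so that the derivative of gap,
   <grad f (x + t h) - grad f x, h> - L t^nu |h|^(1+nu), is <= 0 by Cauchy-Schwarz and
   Hölder continuity. *)
Let gap := (fun s : R => f (x + s *: h)) - inner (grad f x) h \*: @id R
  - K \*: (@powR R)^~ (1 + nu).

Lemma is_derive_gap (t : R) : 0 < t <= 1 -> is_derive t 1 gap
  (inner (grad f (x + t *: h) - grad f x) h - L * t `^ nu * enorm h `^ (1 + nu)).
Proof.
move=> /andP[t_gt0 t_le1].
have Xt : X (x + t *: h) by apply: segment_in; rewrite (ltW t_gt0) t_le1.
apply: is_derive_eq.
  apply: is_deriveB; first apply: is_deriveB.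
  - exact/is_derive_line/df.
  - exact/is_deriveZ/is_derive1_powR.
have -> : 1 + nu - 1 = nu by rewrite addrAC subrr add0r.
rewrite innerBl [_%:A]mulr1 /K /GRing.scale /=; field.
exact: lt0r_neq0.
Qed.

Lemma gap_derive_le0 (t : R) : 0 < t <= 1 ->
  inner (grad f (x + t *: h) - grad f x) h - L * t `^ nu * enorm h `^ (1 + nu) <= 0.
Proof.
move=> /andP[t_gt0 t_le1].
have Xt : X (x + t *: h) by apply: segment_in; rewrite (ltW t_gt0) t_le1.
have := holder_grad _ _ Xt Xx; have t_ge0 := ltW t_gt0.
rewrite addrAC subrr add0r enormZ ger0_norm // powRM ?enorm_ge0 // => grad_le.
rewrite subr_le0; apply: le_trans (cauchy_schwarz _ _) _.
apply: le_trans (ler_wpM2r (enorm_ge0 h) grad_le) _.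
rewrite powRD; last by rewrite gt_eqF.
by rewrite powRr1 ?enorm_ge0 //; lra.
Qed.

Lemma gap_continuous : {within `[0, 1], continuous gap}.
Proof.
have cont_at (t : R) : 0 < t <= 1 -> {for t, continuous gap}.
  move=> t01; apply/differentiable_continuous/derivable1_diffP.
  by have [] := is_derive_gap _ t01.
apply/continuous_within_itvP; first exact: ltr01.
split.
- by move=> t; rewrite in_itv /= => /andP[t_gt0 t_lt1]; apply: cont_at; rewrite t_gt0 ltW.
- have -> : gap 0 = f (x + 0 *: h) - inner (grad f x) h *: 0 - K *: 0 `^ (1 + nu) by [].
  rewrite powR0 ?gt_eqF //; apply: cvgB; last by apply: cvgZl_tmp; exact: powR_cvg0.
  have line_cont0 : {for 0, continuous
      ((fun s : R => f (x + s *: h)) - inner (grad f x) h \*: @id R)}.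
    apply/differentiable_continuous/derivable1_diffP.
    have X0 : X (x + 0 *: h) by rewrite scale0r addr0.
    have : is_derive (0 : R) 1 ((fun s : R => f (x + s *: h)) - inner (grad f x) h \*: @id R)
        (inner (grad f (x + 0 *: h)) h - inner (grad f x) h *: 1).
      by apply: is_deriveB; exact/is_derive_line/df.
    by case.
  exact: cvg_at_right_filter line_cont0.
- by apply: cvg_at_left_filter; apply: cont_at; rewrite ltr01 lexx.
Qed.

Lemma gap_le0 : gap 1 <= gap 0.
Proof.
have gap_derive (t : R) : t \in `]0, 1[ -> is_derive t 1 gap
    (inner (grad f (x + t *: h) - grad f x) h - L * t `^ nu * enorm h `^ (1 + nu)).
  by rewrite in_itv /= => /andP[t_gt0 t_lt1]; apply: is_derive_gap; rewrite t_gt0 ltW.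
have gap_derivable (t : R) : t \in `]0, 1[ -> derivable gap t 1.
  by move=> /gap_derive [].
have gap_derive1_le0 (t : R) : t \in `]0, 1[ -> (gap^`())%classic t <= 0.
  move=> t01; rewrite derive1E; have [_ ->] := gap_derive t t01.
  by move: t01; rewrite in_itv /= => /andP[t_gt0 t_lt1]; apply: gap_derive_le0; rewrite t_gt0 ltW.
apply: (ler0_derive1_le_cc gap_derivable gap_derive1_le0 gap_continuous);
  by rewrite ?in_itv /= ?lexx ?ler01.
Qed.

Theorem holder_descent :
  f (x + h) <= f x + inner (grad f x) h + L / (1 + nu) * enorm h `^ (1 + nu).
Proof.
have gapE (t : R) : gap t = f (x + t *: h) - inner (grad f x) h * t - K * t `^ (1 + nu).
  by [].
have := gap_le0; rewrite !gapE powR1 powR0 ?gt_eqF // scale1r scale0r addr0 /K; lra.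
Qed.

End HolderDescent.

Definition step_size {R : realType} (A : nat -> R) (k : nat) : R :=
  (A k.+1 - A k) / A k.+1.

Section FrankWolfe.
Context {R : realType} {d : nat}.
Context {X : set 'rV[R]_d} {f : 'rV[R]_d -> R} {A : nat -> R} {x z : nat -> 'rV[R]_d}.
Hypothesis convexX : convex_set X.
Hypothesis convex_f : convex_on X f.
Hypothesis df : forall y, X y -> differentiable f y.
Hypothesis A_gt0 : forall k, 0 < A k.
Hypothesis A_le : forall k, A k <= A k.+1.
Hypothesis Xx0 : X (x 0%N).
Hypothesis z_argmin : forall k, X (z k) /\
  (forall w, X w -> inner (grad f (x k)) (z k) <= inner (grad f (x k)) w).
Hypothesis x_next : forall k,
  x k.+1 = step_size A k *: z k + (1 - step_size A k) *: x k.

Lemma step_size_ge0 k : 0 <= step_size A k.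
Proof. by rewrite /step_size divr_ge0 ?subr_ge0 // ltW. Qed.

Lemma step_size_le1 k : step_size A k <= 1.
Proof. by rewrite /step_size ler_pdivrMr // mul1r lerBlDr lerDl ltW. Qed.

Lemma step_size_mul k : A k.+1 * step_size A k = A k.+1 - A k.
Proof. by rewrite /step_size mulrC divfK // lt0r_neq0. Qed.

Lemma iterate_in k : X (x k).
Proof.
elim: k => [//|k Xxk]; rewrite x_next.
have := convexX (z k) (x k) (Itv01 (step_size_ge0 k) (step_size_le1 k)).
by rewrite !inE => /(_ (z_argmin k).1 Xxk).
Qed.

Lemma iterate_step k : x k.+1 = x k + step_size A k *: (z k - x k).
Proof. by rewrite x_next scalerBr scalerBl scale1r addrCA. Qed.

Theorem energy_increment_le (nu L : R) y k : 0 <= nu ->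
  (forall u v, X u -> X v -> enorm (grad f u - grad f v) <= L * enorm (u - v) `^ nu) ->
  X y ->
  A k.+1 * (f (x k.+1) - f y) - A k * (f (x k) - f y)
  <= A k.+1 * (L / (1 + nu))
     * (step_size A k `^ (1 + nu) * enorm (z k - x k) `^ (1 + nu)).
Proof.
move=> nu_ge0 holder_grad Xy.
have [Xz z_le] := z_argmin k; have Xxk := iterate_in k.
have t_ge0 := step_size_ge0 k.
set t := step_size A k in t_ge0 *; set g := grad f (x k).
have descent : f (x k.+1) - f (x k) <= t * (inner g (z k) - inner g (x k))
    + L / (1 + nu) * (t `^ (1 + nu) * enorm (z k - x k) `^ (1 + nu)).
  have Xnext : X (x k + t *: (z k - x k)) by rewrite -iterate_step; exact: iterate_in.
  have := holder_descent convexX df Xxk Xnext nu_ge0 holder_grad.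
  by rewrite -iterate_step enormZ ger0_norm // powRM ?enorm_ge0 // innerZr innerBr; lra.
have convexity : f (x k) - f y <= inner g (x k) - inner g y.
  by have := convex_on_grad_le convex_f Xxk Xy (df _ Xxk); rewrite innerBr; lra.
have z_opt := z_le y Xy.
have At_ge0 : 0 <= A k.+1 * t by rewrite mulr_ge0 // ltW.
rewrite (_ : _ - _ = A k.+1 * (f (x k.+1) - f (x k)) + A k.+1 * t * (f (x k) - f y));
  last by rewrite step_size_mul; ring.
have := ler_wpM2l (ltW (A_gt0 k.+1)) descent.
have := ler_wpM2l At_ge0 convexity.
have : A k.+1 * t * (inner g (z k) - inner g y) <= 0 by rewrite mulr_ge0_le0 // subr_le0.
lra.
Qed.

End FrankWolfe.

Theorem proposition10 (R : realType) (d : nat) (X : set 'rV[R]_d)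
  (f : 'rV[R]_d -> R) (eps delta : R) (A : nat -> R)
  (x z : nat -> 'rV[R]_d) :
  convex_set X -> compact X ->
  convex_on X f -> (forall y, X y -> differentiable f y) ->
  0 < eps -> 0 < delta ->
  (forall k, 0 < A k) -> (forall k, A k <= A k.+1) ->
  X (x 0%N) ->
  (forall k, X (z k) /\
     (forall w, X w -> inner (grad f (x k)) (z k) <= inner (grad f (x k)) w)) ->
  (forall k, x k.+1 = ((A k.+1 - A k) / A k.+1) *: z k
                      + (1 - (A k.+1 - A k) / A k.+1) *: x k) ->
  ((forall u v, X u -> X v ->
      enorm (grad f u - grad f v) <= eps^-1 * enorm (u - v)) ->
    forall y k, X y ->
      (A k.+1 * (f (x k.+1) - f y) - A k * (f (x k) - f y)) / delta
      <= A k.+1 * ((A k.+1 - A k) / A k.+1) ^+ 2 / (2 * eps * delta)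
         * enorm (z k - x k) ^+ 2)
  /\
  (forall nu, 0 < nu <= 1 ->
    (forall u v, X u -> X v ->
      enorm (grad f u - grad f v) <= eps^-1 * powR (enorm (u - v)) nu) ->
    forall y k, X y ->
      (A k.+1 * (f (x k.+1) - f y) - A k * (f (x k) - f y)) / delta
      <= A k.+1 * powR ((A k.+1 - A k) / A k.+1) (1 + nu) / ((1 + nu) * eps * delta)
         * powR (enorm (z k - x k)) (1 + nu)).
Proof.
(* Compactness of X only ensures that the minimizers z k exist; they are given here. *)
move=> convexX _ convex_f df eps_gt0 delta_gt0 A_gt0 A_le Xx0 z_argmin x_next.
have holder nu : 0 < nu <= 1 ->
    (forall u v, X u -> X v ->
      enorm (grad f u - grad f v) <= eps^-1 * powR (enorm (u - v)) nu) ->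
    forall y k, X y ->
      (A k.+1 * (f (x k.+1) - f y) - A k * (f (x k) - f y)) / delta
      <= A k.+1 * powR (step_size A k) (1 + nu) / ((1 + nu) * eps * delta)
         * powR (enorm (z k - x k)) (1 + nu).
  move=> /andP[nu_gt0 _] holder_grad y k Xy.
  have := energy_increment_le convexX convex_f df A_gt0 A_le Xx0 z_argmin x_next
    nu _ y k (ltW nu_gt0) holder_grad Xy.
  have delta_inv_ge0 : 0 <= delta^-1 by rewrite invr_ge0 ltW.
  move=> /(ler_wpM2r delta_inv_ge0) /le_trans; apply.
  rewrite le_eqVlt; apply/orP; left; apply/eqP; field.
  by rewrite !lt0r_neq0 //; lra.
split=> [lipschitz y k Xy|]; last exact: holder.
have := holder 1; rewrite ltr01 lexx => /(_ isT _ y k Xy).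
rewrite -[1 + 1]/(2%:R) !powR_mulrn ?enorm_ge0 ?step_size_ge0 //; apply.
by move=> u v Xu Xv; rewrite powRr1 ?enorm_ge0 //; exact: lipschitz.
Qed.
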